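(* Let $I,S,C\subseteq G$ be pairwise disjoint. Then $I$ is AD-separated from $S$ by $C$ if and only if there exists a closed subset $K$ of $G$ such that $S\subseteq K$, $P(K)\subseteq C$, $I\subseteq N'(K)$ and $D(K)\cap C=\emptyset$.
   Context: $G$ is a finite set of nodes forming a DAG. $P(s)$: parents of $s$; $s\sqsubseteq v$: directed path (possibly trivial) from $s$ to $v$; $s\sqsubset v$: additionally $s\neq v$; $D(s)=\{v:s\sqsubset v\}$. For $K\subseteq G$: $P(K)=(\bigcup_{s\in K}P(s))\setminus K$, $D(K)=(\bigcup_{s\in K}D(s))\setminus K$, $N(K)=G\setminus(K\cup D(K))$, $N'(K)=N(K)\setminus P(K)$; $K$ is closed if $s\sqsubseteq k\sqsubseteq t$ with $s,t\in K$, $k\in G$ implies $k\in K$. A path $s_1,\dots,s_n$ ($n\geq1$) is a sequence of nodes in which consecutive nodes are joined by an edge in either direction. It is blocked by $C\subseteq G$ if at least one holds: (B1) $s_1\in C$; (B2) some $s_i$ with $1<i<n$ has $s_i\to s_{i+1}$ and $s_i\in C$; (B3) some $s_i$ with $1<i<n$ has $s_{i-1}\to s_i\leftarrow s_{i+1}$, $s_i\notin C$ and $D(s_i)\cap C=\emptyset$; (B4) $s_n\in C$. $I$ is AD-separated from $S$ by $C$ if every path $i=s_1,\dots,s_n=s$ ($n\ge1$) from any $i\in I$ to any $s\in S$ is blocked by $C$. *)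

From mathcomp Require Import all_boot.
Set Implicit Arguments. Unset Strict Implicit. Unset Printing Implicit Defensive.

Section DAG.
Variables (T : finType) (e : rel T).
(* e x y  means there is a directed edge x -> y. *)

Definition acyclic_rel : Prop := forall x y, e x y -> ~~ connect e y x.

(* s ⊑ v  is  connect e s v ;  s ⊏ v  is  connect e s v && (s != v) *)
Definition parents (s : T) : {set T} := [set p | e p s].
Definition desc (s : T) : {set T} := [set v | connect e s v && (s != v)].

Definition parK (K : {set T}) : {set T} := (\bigcup_(s in K) parents s) :\: K.
Definition descK (K : {set T}) : {set T} := (\bigcup_(s in K) desc s) :\: K.
Definition nondescK (K : {set T}) : {set T} := ~: (K :|: descK K).
Definition nondescK' (K : {set T}) : {set T} := nondescK K :\: parK K.

Definition closedK (K : {set T}) : Prop :=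
  forall s k t, s \in K -> t \in K -> connect e s k -> connect e k t -> k \in K.

Definition adj : rel T := fun x y => e x y || e y x.

(* A path s_1,...,s_n (n >= 1) is represented as x :: p with path adj x p;
   in 0-based indices, l = x :: p has nodes nth x l 0, ..., nth x l (n-1). *)
Definition blocked (C : {set T}) (x : T) (p : seq T) : Prop :=
  let l := x :: p in
  let n := size l in
  let s := nth x l in
  [\/ x \in C,
      (exists i, [/\ 0 < i, i.+1 < n, e (s i) (s i.+1) & s i \in C]),
      (exists i, [/\ 0 < i < n.-1, e (s i.-1) (s i), e (s i.+1) (s i),
                    s i \notin C & [disjoint desc (s i) & C]])
    | last x p \in C].

Definition ADsep (I S C : {set T}) : Prop :=
  forall i s (p : seq T), i \in I -> s \in S -> path adj i p -> last i p = s ->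
    blocked C i p.

End DAG.

(* If I is AD-separated from S by C, take for K the set of nodes v from which
   some path to S is active when v is entered through an arrowhead.  Extending
   such a path backwards along an edge u -> v with u outside C keeps it active,
   so P(K) is contained in C; extending it forwards to a child that is in C or
   has a descendant in C keeps it active too, which gives both that K is closed
   and that D(K) avoids C.  A node of I in K, in D(K) or in P(K) would yield an
   unblocked path from I to S.  Conversely, walk an unblocked path from its end
   in K back towards its start: it cannot leave K through a parent, since P(K)
   lies in C, and once in D(K) every further step must go to a child, since a
   collider in D(K) is outside C and has no descendant in C; closedness keeps
   these children in D(K), so the start is in K or D(K), not in N'(K). *)
From Stdlib Require Import Classical ClassicalEpsilon.
From mathcomp Require Import all_boot.
Set Implicit Arguments. Unset Strict Implicit. Unset Printing Implicit Defensive.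

Definition asbool (P : Prop) : bool :=
  if excluded_middle_informative P then true else false.

Lemma asboolP (P : Prop) : reflect P (asbool P).
Proof. by rewrite /asbool; case: excluded_middle_informative => h; constructor. Qed.

Section Descendants.
Variables (T : finType) (e : rel T) (K : {set T}).

Lemma mem_descK x s : x \notin K -> s \in K -> connect e s x -> x \in descK e K.
Proof.
move=> xK sK sx; rewrite in_setD xK; apply/bigcupP; exists s => //.
by rewrite inE sx; apply: contraNneq xK => <-.
Qed.

Lemma descKP x :
  x \in descK e K -> x \notin K /\ exists2 s, s \in K & connect e s x.
Proof.
rewrite in_setD => /andP[xK /bigcupP[s sK]]; rewrite inE => /andP[sx _].
by split=> //; exists s.
Qed.

Lemma desc_descK_disjoint (C : {set T}) x :
  closedK e K -> [disjoint descK e K & C] -> x \in descK e K ->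
  [disjoint desc e x & C].
Proof.
move=> clK DC /descKP[xK [s sK sx]]; rewrite disjoints_subset; apply/subsetP => d.
rewrite !inE => /andP[xd _]; have dK : d \notin K.
  by apply: contra xK => dK; apply: (clK s x d).
by rewrite (disjointFr DC (mem_descK dK sK (connect_trans sx xd))).
Qed.

End Descendants.

Section ActivePaths.
Variables (T : finType) (e : rel T) (C : {set T}).

(* [active into x p] says that no inner node of [x :: p] blocks it, where the
   head [x] counts as inner too, entered through an arrowhead iff [into]. *)
Fixpoint active (into : bool) (x : T) (p : seq T) : bool :=
  if p is y :: q then
    [&& ~~ (e x y && (x \in C)),
        ~~ [&& into, e y x, x \notin C & [disjoint desc e x & C]]
      & active (e x y) y q]
  else true.

Definition active_at (into : bool) (x : T) (p : seq T) (d : T) (i : nat) : bool :=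
  let s := nth d (x :: p) in
  ~~ (e (s i) (s i.+1) && (s i \in C)) &&
  ~~ [&& (if i is j.+1 then e (s j) (s i) else into), e (s i.+1) (s i),
         s i \notin C & [disjoint desc e (s i) & C]].

Lemma active_atS into x y q d j :
  active_at into x (y :: q) d j.+1 = active_at (e x y) y q d j.
Proof. by case: j. Qed.

Lemma activeP into x p d :
  reflect (forall i, i < size p -> active_at into x p d i) (active into x p).
Proof.
elim: p x into => [|y q IH] x into /=; first by apply: ReflectT => i; rewrite ltn0.
apply: (iffP and3P) => [[h0 h1 /IH hq] [|j] //= lt_j|h].
- by rewrite /active_at /= h0 h1.
- by rewrite active_atS; apply: hq.
- have := h 0 isT; rewrite /active_at /= => /andP[h0 h1]; split => //.
  by apply/IH => j lt_j; rewrite -(active_atS into); apply: h.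
Qed.

Lemma activeW x p : active true x p -> active false x p.
Proof. by case: p => //= y q /and3P[-> _ ->]. Qed.

Lemma blockedNP x p :
  ~ blocked e C x p <-> [/\ x \notin C, last x p \notin C & active false x p].
Proof.
split=> [nb | [xC lC /(activeP _ _ _ x) act]].
  have xC : x \notin C by apply/negP => xC; apply: nb; apply: Or41.
  split=> //; first by apply/negP => lC; apply: nb; apply: Or44.
  apply/(activeP _ _ _ x) => -[|j] lt_j; rewrite /active_at /=.
    by rewrite (negbTE xC) andbF.
  apply/andP; split; apply/negP.
    by move=> /andP[??]; apply: nb; apply: Or42; exists j.+1; split.
  by move=> /and4P[????]; apply: nb; apply: Or43; exists j.+1; split.
case=> [|[i [i_gt0 lt_i ei iC]]|[[|j] [/andP[//= _ lt_j] ej' ej ejC dj]]|].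
- exact/negP.
- by move: (act i lt_i); rewrite /active_at ei iC.
- by move: (act j.+1 lt_j); rewrite /active_at /= ej' ej ejC dj andbF.
- exact/negP.
Qed.

Lemma active_path_to_closed (K : {set T}) :
  closedK e K -> parK e K \subset C -> [disjoint descK e K & C] ->
  forall p x into, path (adj e) x p -> last x p \in K -> active into x p ->
  x \in K \/ (x \in descK e K /\ ~~ into).
Proof.
move=> clK PC DC; elim=> [|y q IH] x into /=; first by move=> _ ->; left.
move=> /andP[axy qp] lK /and3P[bx cx act].
have [xK | xK] := boolP (x \in K); first by left.
have [eyx [s sK sx]] : e y x /\ exists2 s, s \in K & connect e s x.
  have [yK | [yD /negbTE nexy]] := IH _ _ qp lK act.
    have nexy : e x y = false.
      apply: contraNF bx => exy; rewrite exy (subsetP PC) // in_setD xK.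
      by apply/bigcupP; exists y; rewrite ?inE.
    have eyx : e y x by move: axy; rewrite /adj nexy.
    by split=> //; exists y; rewrite ?connect1.
  have eyx : e y x by move: axy; rewrite /adj nexy.
  have [_ [s sK sy]] := descKP yD.
  by split=> //; exists s; rewrite // (connect_trans sy (connect1 eyx)).
have xD := mem_descK xK sK sx; right; split=> //; apply: contra cx => into_x.
by rewrite into_x eyx (disjointFr DC xD) (desc_descK_disjoint clK DC xD).
Qed.

Hypothesis dag : acyclic_rel e.

Lemma edge_asym x y : e x y -> ~~ e y x.
Proof. by move=> exy; apply/negP => eyx; move: (dag exy); rewrite connect1. Qed.

Section Witness.
Variable S : {set T}.

Definition dconnected (into : bool) (v : T) : Prop :=
  exists2 p, path (adj e) v p & (last v p \in S) && active into v p.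

Lemma dconnectedW v : dconnected true v -> dconnected false v.
Proof. by case=> p pp /andP[lS act]; exists p; rewrite // lS activeW. Qed.

Lemma dconnected_parent u k :
  dconnected true k -> e u k -> u \notin C -> dconnected true u.
Proof.
case=> p pp /andP[lS act] euk uC; exists (k :: p); first by rewrite /= pp /adj euk.
by rewrite lS /= euk (negbTE uC) (negbTE (edge_asym euk)).
Qed.

Lemma dconnected_child k t :
  dconnected true k -> e k t -> (t \in C) || ~~ [disjoint desc e t & C] ->
  dconnected true t.
Proof.
case=> p pp /andP[lS act] ekt tC; exists (k :: p).
  by rewrite /= pp /adj ekt orbT.
rewrite lS /= (negbTE (edge_asym ekt)) ekt activeW //=.
by case/orP: tC => [-> | /negbTE ->]; rewrite ?andbF.
Qed.

Lemma dconnectedF_connect k x :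
  dconnected false k -> connect e k x -> dconnected false x.
Proof.
move=> dk /connectP[q qp ->]; elim: q k dk qp => [//|y q IH] k dk /= /andP[eky qp].
apply: IH qp; case: dk => p pp /andP[lS act].
by exists (k :: p); rewrite /= ?pp /adj ?eky ?orbT // lS (negbTE (edge_asym eky)).
Qed.

Lemma dconnected_towards x y c :
  dconnected true x -> connect e x y -> connect e y c -> c \in C ->
  dconnected true y.
Proof.
move=> dx /connectP[q qp ->]; elim: q x dx qp => [//|z q IH] x dx /= /andP[exz qp].
move=> lc cC; have zc : connect e z c.
  by apply: connect_trans lc; apply/connectP; exists q.
apply: (IH _ _ qp lc cC); apply: (dconnected_child dx exz).
have [-> | neq_zc] := eqVneq z c; first by rewrite cC.
by apply/orP; right; apply: contraL cC => /disjointFr->; rewrite // inE zc neq_zc.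
Qed.

Lemma dconnected_ancestor y t :
  connect e y t -> dconnected true t -> (forall c, connect e y c -> c \notin C) ->
  dconnected true y.
Proof.
move=> /connectP[q qp ->]; elim: q y qp => [//|z q IH] y /= /andP[eyz qp].
move=> dt noC; apply: (dconnected_parent _ eyz (noC y (connect0 _ _))).
by apply: IH qp dt _ => c zc; apply/noC/(connect_trans (connect1 eyz)).
Qed.

Definition dconnected_set : {set T} := [set v | asbool (dconnected true v)].

Lemma in_dconnected_set v :
  reflect (dconnected true v) (v \in dconnected_set).
Proof. by rewrite inE; apply: asboolP. Qed.

Lemma closed_dconnected_set : closedK e dconnected_set.
Proof.
move=> s k t /in_dconnected_set ds /in_dconnected_set dt sk kt.
apply/in_dconnected_set.
have [/existsP[c /andP[kc cC]] | /existsPn noC] :=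
  boolP [exists c, connect e k c && (c \in C)].
  exact: dconnected_towards ds sk kc cC.
by apply: dconnected_ancestor kt dt _ => c kc; move: (noC c); rewrite kc.
Qed.

Lemma sub_dconnected_set : S \subset dconnected_set.
Proof.
by apply/subsetP => s sS; apply/in_dconnected_set; exists [::]; rewrite /= ?sS.
Qed.

Lemma parK_dconnected_set : parK e dconnected_set \subset C.
Proof.
apply/subsetP => u; rewrite in_setD => /andP[uK /bigcupP[k /in_dconnected_set dk]].
rewrite inE => euk; apply: contraNT uK => uC.
exact/in_dconnected_set/(dconnected_parent dk euk uC).
Qed.

Lemma descK_dconnected_set_disjoint : [disjoint descK e dconnected_set & C].
Proof.
rewrite disjoints_subset; apply/subsetP => d.
move=> /descKP[dK [k /in_dconnected_set dk kd]].
rewrite inE; apply: contraNN dK => dC.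
exact/in_dconnected_set/(dconnected_towards dk kd (connect0 _ d) dC).
Qed.

Lemma nondescK'_dconnected_set i :
  i \notin C -> ~ dconnected false i -> i \in nondescK' e dconnected_set.
Proof.
move=> iC ndi.
have iK : i \notin dconnected_set by apply/in_dconnected_set => /dconnectedW.
rewrite in_setD in_setC in_setU negb_or iK /=; apply/andP; split.
  apply: contra iK; rewrite in_setD => /andP[_ /bigcupP[k /in_dconnected_set dk]].
  by rewrite inE => eik; apply/in_dconnected_set/(dconnected_parent dk eik iC).
apply/negP => /descKP[_ [k /in_dconnected_set/dconnectedW dk ki]].
exact/ndi/(dconnectedF_connect dk ki).
Qed.

End Witness.

End ActivePaths.

Theorem proposition2 (T : finType) (e : rel T) (dag : acyclic_rel e)
    (I S C : {set T})
    (dIS : [disjoint I & S]) (dIC : [disjoint I & C]) (dSC : [disjoint S & C]) :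
  ADsep e I S C <->
  exists K : {set T},
    [/\ closedK e K, S \subset K, parK e K \subset C,
        I \subset nondescK' e K & [disjoint descK e K & C]].
Proof.
split=> [sep | [K [clK SK PC IN DC]] i s p iI sS pp lp].
  exists (dconnected_set e C S); split.
  - exact: closed_dconnected_set.
  - exact: sub_dconnected_set.
  - exact: parK_dconnected_set.
  - apply/subsetP => i iI; apply: (nondescK'_dconnected_set dag).
      by rewrite (disjointFr dIC iI).
    case=> p pp /andP[lS act]; move: (sep i _ p iI lS pp erefl); apply/blockedNP.
    by rewrite (disjointFr dIC iI) (disjointFr dSC lS).
  - exact: descK_dconnected_set_disjoint.
apply: NNPP => /blockedNP[_ _ act]; have lK : last i p \in K by rewrite lp (subsetP SK).
move: (subsetP IN i iI); rewrite in_setD in_setC in_setU negb_or.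
by case: (active_path_to_closed clK PC DC pp lK act) => [-> | [-> _]]; rewrite ?andbF.
Qed.
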